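(* Let $F=(f_t)_{t\in\mathbb{R}}$ be a continuous flow on a compact metric space $X$, $\phi\colon X\to\mathbb{R}$ continuous, and $\mathcal{G}\subset X\times\mathbb{R}^+$. Suppose that $\mathcal{G}\cap(X\times[T_0,\infty))$ has (W)-specification at scale $\delta>0$ with maximum gap size $\tau$, and $\zeta>\delta$ is such that $\phi$ has the Bowen property on $\mathcal{G}$ at scale $\zeta$. Then for every $\gamma>2\zeta$ there is a constant $C_1>0$ such that for every $k\in\mathbb{N}$ and $t_1,\dots,t_k\ge T_0$, writing $T=\sum_{i=1}^kt_i+(k-1)\tau$ and $\theta=\zeta-\delta$, we have $$\prod_{j=1}^k\Lambda(\mathcal{G},\gamma,0,t_j)\le C_1^k\Lambda(X,\theta,0,T).$$
   Context: $\mathbb{R}^+=[0,\infty)$. $d_t(x,y)=\sup_{s\in[0,t]}d(f_sx,f_sy)$, $B_t(x,\eta)=\{y:d_t(x,y)<\eta\}$; $E$ is $(t,\delta)$-separated if $d_t(x,y)>\delta$ for distinct $x,y\in E$. $\mathcal{C}_t=\{x:(x,t)\in\mathcal{C}\}$; $\Phi_\eta(x,t)=\sup_{y\in B_t(x,\eta)}\int_0^t\phi(f_sy)ds$; $\Lambda(\mathcal{C},\delta,\eta,t)=\sup\{\sum_{x\in E}e^{\Phi_\eta(x,t)}:E\subset\mathcal{C}_t\ (t,\delta)\text{-separated}\}$, with $X$ meaning $\mathcal{C}=X\times\mathbb{R}^+$. A collection $\mathcal{G}'$ has (W)-specification at scale $\delta$ with maximum gap size $\tau$ if for every $\{(x_i,t_i)\}_{i=1}^k\subset\mathcal{G}'$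 there are $y\in X$ and $\tau_1,\dots,\tau_{k-1}\in[0,\tau]$ with $d_{t_j}(f_{s_{j-1}+\tau_{j-1}}y,x_j)<\delta$ for $1\le j\le k$, where $s_j=\sum_{i\le j}t_i+\sum_{i\le j-1}\tau_i$, $s_0=\tau_0=0$; and if two collections agree in their first $j$ entries then their gluing times agree for indices $<j$. $\phi$ has the Bowen property at scale $\zeta$ on $\mathcal{G}$ if there is $K$ with $\sup_{y\in B_t(x,\zeta)}|\Phi_0(x,t)-\Phi_0(y,t)|\le K$ for all $(x,t)\in\mathcal{G}$. *)

From Stdlib Require Import Reals List.
From Coquelicot Require Import Coquelicot.
Open Scope R_scope.

Section FlowDefs.
Context {X : Type} (d : X -> X -> R).

Definition is_metric : Prop :=
  (forall x y, 0 <= d x y) /\ (forall x y, d x y = 0 <-> x = y) /\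
  (forall x y, d x y = d y x) /\ (forall x y z, d x z <= d x y + d y z).

Definition is_open (U : X -> Prop) : Prop :=
  forall x, U x -> exists r, 0 < r /\ forall y, d x y < r -> U y.

Definition is_compact : Prop :=
  forall (I : Type) (U : I -> X -> Prop),
    (forall i, is_open (U i)) -> (forall x, exists i, U i x) ->
    exists l : list I, forall x, exists i, In i l /\ U i x.

Definition is_continuous_flow (f : R -> X -> X) : Prop :=
  (forall x, f 0 x = x) /\
  (forall s t x, f (s + t) x = f s (f t x)) /\
  (forall s x eps, 0 < eps -> exists eta, 0 < eta /\
     forall s' x', Rabs (s' - s) < eta -> d x x' < eta ->
       d (f s x) (f s' x') < eps).

Definition is_continuous_fun (phi : X -> R) : Prop :=
  forall x eps, 0 < eps -> exists eta, 0 < eta /\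
    forall y, d x y < eta -> Rabs (phi y - phi x) < eps.

Variable f : R -> X -> X.

Definition dt (t : R) (x y : X) : Rbar :=
  Lub_Rbar (fun v => exists s, 0 <= s <= t /\ v = d (f s x) (f s y)).

Definition separated (t delta : R) (E : list X) : Prop :=
  forall x y, In x E -> In y E -> x <> y -> Rbar_lt (Finite delta) (dt t x y).

Variable phi : X -> R.

Definition Phi0 (x : X) (t : R) : R := RInt (fun s => phi (f s x)) 0 t.

Definition Lambda0 (C : X -> R -> Prop) (delta t : R) : Rbar :=
  Lub_Rbar (fun v => exists E : list X, NoDup E /\
      (forall x, In x E -> C x t) /\ separated t delta E /\
      v = fold_right (fun x acc => exp (Phi0 x t) + acc) 0 E).

(* start time of the m-th orbit segment (0-based) given segment lengths
   ts and gap function g (g i = gap after segment i, 0-based):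
   sum_{i<m} (t_i + g i) *)
Fixpoint seg_start (ts : list R) (g : nat -> R) (m : nat) : R :=
  match m, ts with
  | O, _ => 0
  | S m', t :: ts' => t + g O + seg_start ts' (fun i => g (S i)) m'
  | S _, nil => 0
  end.

Definition W_specification (G' : X -> R -> Prop) (delta tau : R) : Prop :=
  exists gaps : list (X * R) -> nat -> R,
    (forall L : list (X * R), (forall p, In p L -> G' (fst p) (snd p)) ->
      (forall i, (S i < length L)%nat -> 0 <= gaps L i <= tau) /\
      exists y : X, forall j, (j < length L)%nat ->
        let p := nth j L (fst (hd (y, 0) L), 0) in
        Rbar_lt (dt (snd p)
                   (f (seg_start (map snd L) (gaps L) j) y) (fst p))
                (Finite delta)) /\
    (forall L1 L2 j,
       (forall p, In p L1 -> G' (fst p) (snd p)) ->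
       (forall p, In p L2 -> G' (fst p) (snd p)) ->
       firstn j L1 = firstn j L2 ->
       forall i, (S i < j)%nat -> gaps L1 i = gaps L2 i).

Definition Bowen_property (G : X -> R -> Prop) (zeta : R) : Prop :=
  exists K, forall x t, G x t -> forall y, Rbar_lt (dt t x y) (Finite zeta) ->
    Rabs (Phi0 x t - Phi0 y t) <= K.

End FlowDefs.

Definition Rbar_prod (l : list Rbar) : Rbar := fold_right Rbar_mult (Finite 1) l.

From Stdlib Require Import Reals List Lra Lia ZArith Classical ClassicalEpsilon.
From Coquelicot Require Import Coquelicot.
Open Scope R_scope.

(* Fix (t_j, gamma)-separated sets E_j of segments in G.  For every tuple (x_1, ..., x_k)
   in E_1 x ... x E_k, specification yields an orbit y shadowing the segments within delta,
   glued with gaps of length at most tau; by the Bowen property and |phi| <= M, the weight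
   prod_j exp Phi_0(x_j, t_j) is at most exp(K + M |tau|)^k exp Phi_0(y, T).  Sort the tuples
   by the cells of width eta containing their gaps.  Two distinct tuples in the same cell
   agree up to a first differing segment j, so consistency of the gluing times makes their
   j-th starting times eta-close; the gamma-separation of E_j, the two shadowings and the
   uniform continuity of the flow in time (eta chosen for gamma - 2 delta - theta) then make
   the shadowing orbits (T, theta)-separated.  Hence each of the at most (1 + |tau|/eta)^(k-1)
   cells contributes at most exp(K + M |tau|)^k Lambda(X, theta, 0, T). *)

Definition sumR (l : list R) : R := fold_right Rplus 0 l.
Definition prodR (l : list R) : R := fold_right Rmult 1 l.

Lemma sumR_app (l1 l2 : list R) : sumR (l1 ++ l2) = sumR l1 + sumR l2.
Proof. induction l1 as [|a l1 IH]; simpl; [ring|]. unfold sumR in *; simpl; rewrite IH; ring. Qed.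

Lemma sumR_fold {A} (F : A -> R) (l : list A) :
  fold_right (fun x acc => F x + acc) 0 l = sumR (map F l).
Proof. induction l as [|a l IH]; simpl; [reflexivity|]. now rewrite IH. Qed.

Lemma sumR_map_plus {A} (F1 F2 : A -> R) (l : list A) :
  sumR (map (fun x => F1 x + F2 x) l) = sumR (map F1 l) + sumR (map F2 l).
Proof. induction l as [|a l IH]; unfold sumR in *; simpl; [ring|]. rewrite IH; ring. Qed.

Lemma sumR_map_mult_r {A} (F : A -> R) (c : R) (l : list A) :
  sumR (map (fun x => F x * c) l) = sumR (map F l) * c.
Proof. induction l as [|a l IH]; unfold sumR in *; simpl; [ring|]. rewrite IH; ring. Qed.

Lemma sumR_map_affine {A} (F H : A -> R) (a b : R) (l : list A) :
  sumR (map (fun x => F x + a + b * H x) l)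
  = sumR (map F l) + INR (length l) * a + b * sumR (map H l).
Proof.
  induction l as [|x l IH]; [unfold sumR; simpl; ring|].
  cbn [map length]. rewrite S_INR. unfold sumR in *; simpl. rewrite IH; ring.
Qed.

Lemma sumR_flat_map {A B} (F : B -> R) (g : A -> list B) (l : list A) :
  sumR (map F (flat_map g l)) = sumR (map (fun a => sumR (map F (g a))) l).
Proof. induction l as [|a l IH]; simpl; [reflexivity|]. now rewrite map_app, sumR_app, IH. Qed.

Lemma sumR_le {A} (F1 F2 : A -> R) (l : list A) :
  (forall x, In x l -> F1 x <= F2 x) -> sumR (map F1 l) <= sumR (map F2 l).
Proof.
  induction l as [|a l IH]; intros H; unfold sumR in *; simpl; [lra|].
  specialize (IH (fun x Hx => H x (or_intror Hx))). specialize (H a (or_introl eq_refl)). lra.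
Qed.

Lemma sumR_nonneg (l : list R) : (forall x, In x l -> 0 <= x) -> 0 <= sumR l.
Proof.
  induction l as [|a l IH]; intros H; unfold sumR in *; simpl; [lra|].
  specialize (IH (fun x Hx => H x (or_intror Hx))). specialize (H a (or_introl eq_refl)). lra.
Qed.

Lemma sumR_le_const {A} (F : A -> R) (B : R) (l : list A) :
  (forall x, In x l -> F x <= B) -> sumR (map F l) <= INR (length l) * B.
Proof.
  induction l as [|a l IH]; intros H; [unfold sumR; simpl; lra|].
  specialize (IH (fun x Hx => H x (or_intror Hx))). specialize (H a (or_introl eq_refl)).
  cbn [map length]. rewrite S_INR. unfold sumR in *; simpl. lra.
Qed.

Lemma sumR_map_nth {A} (F : A -> R) (l : list A) (a0 : A) :
  sumR (map F l) = sumR (map (fun j => F (nth j l a0)) (seq 0 (length l))).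
Proof.
  induction l as [|a l IH]; simpl; [reflexivity|].
  rewrite IH, <- seq_shift, map_map. reflexivity.
Qed.

Lemma prodR_exp {A} (F : A -> R) (l : list A) :
  prodR (map (fun x => exp (F x)) l) = exp (sumR (map F l)).
Proof.
  induction l as [|a l IH]; unfold prodR, sumR in *; simpl; [now rewrite exp_0|].
  now rewrite IH, exp_plus.
Qed.

Lemma exp_pow (x : R) (n : nat) : exp x ^ n = exp (INR n * x).
Proof.
  induction n as [|n IH]; [simpl; now rewrite Rmult_0_l, exp_0|].
  rewrite S_INR, <- tech_pow_Rmult, IH, <- exp_plus. f_equal; ring.
Qed.

Lemma exp_le (x y : R) : x <= y -> exp x <= exp y.
Proof.
  intros H; destruct (Rle_lt_or_eq_dec _ _ H) as [Hlt|Heq]; [now apply Rlt_le, exp_increasing|].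
  rewrite Heq; apply Rle_refl.
Qed.

Lemma Lub_Rbar_ub (E : R -> Prop) (v : R) : E v -> Rbar_le (Finite v) (Lub_Rbar E).
Proof. intros Hv. now apply (Lub_Rbar_correct E). Qed.

Lemma Lub_Rbar_le (E : R -> Prop) (b : R) :
  (forall v, E v -> v <= b) -> Rbar_le (Lub_Rbar E) (Finite b).
Proof. intros H. apply (Lub_Rbar_correct E). intros v Hv. exact (H v Hv). Qed.

Lemma Rbar_mult_nonneg (x y : Rbar) :
  Rbar_le 0 x -> Rbar_le 0 y -> Rbar_le 0 (Rbar_mult x y).
Proof.
  destruct x as [x| |], y as [y| |]; simpl; intros Hx Hy; try contradiction;
  unfold Rbar_mult, Rbar_mult'; simpl; try (apply Rmult_le_pos; auto);
  repeat (destruct Rle_dec; try destruct Rle_lt_or_eq_dec); simpl; auto; lra.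
Qed.

Lemma Rbar_mult_pos_p_infty (v : R) : 0 < v -> Rbar_mult (Finite v) p_infty = p_infty.
Proof.
  intros H; unfold Rbar_mult, Rbar_mult';
  repeat (destruct Rle_dec; try destruct Rle_lt_or_eq_dec); auto; lra.
Qed.

Lemma Rbar_mult_Lub_le (S : R -> Prop) (P : Rbar) (b : R) :
  S 0 -> (forall v, S v -> 0 <= v) -> Rbar_le 0 P ->
  (forall v, S v -> Rbar_le (Rbar_mult (Finite v) P) (Finite b)) ->
  Rbar_le (Rbar_mult (Lub_Rbar S) P) (Finite b).
Proof.
  intros S0 Spos HP Hb.
  assert (Hb0 : 0 <= b) by (specialize (Hb 0 S0); now rewrite Rbar_mult_0_l in Hb).
  assert (HL0 : Rbar_le 0 (Lub_Rbar S)) by now apply Lub_Rbar_ub.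
  destruct P as [p| |]; simpl in HP; try contradiction.
  - destruct (Rle_lt_or_eq_dec _ _ HP) as [Hp|<-]; [|now rewrite Rbar_mult_0_r].
    assert (HL : Rbar_le (Lub_Rbar S) (Finite (b / p))).
    { apply Lub_Rbar_le. intros v Hv. specialize (Hb v Hv). simpl in Hb.
      apply Rmult_le_reg_r with p; [exact Hp|]. field_simplify; lra. }
    destruct (Lub_Rbar S) as [l| |]; simpl in HL, HL0 |- *; try contradiction.
    apply Rmult_le_reg_r with (/ p); [now apply Rinv_0_lt_compat|].
    replace (l * p * / p) with l by (field; lra). exact HL.
  - assert (HL : Rbar_le (Lub_Rbar S) (Finite 0)).
    { apply Lub_Rbar_le. intros v Hv. specialize (Hb v Hv).
      destruct (Rle_lt_or_eq_dec _ _ (Spos v Hv)) as [Hv0|Hv0]; [|lra].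
      now rewrite Rbar_mult_pos_p_infty in Hb. }
    destruct (Lub_Rbar S) as [l| |]; simpl in HL, HL0; try contradiction.
    replace l with 0 by lra. now rewrite Rbar_mult_0_l.
Qed.

Lemma Rbar_prod_Lub_nonneg (S : R -> R -> Prop) (ts : list R) :
  (forall t, S t 0) -> Rbar_le 0 (Rbar_prod (map (fun t => Lub_Rbar (S t)) ts)).
Proof.
  intros S0; induction ts as [|t ts IH]; cbn [map]; [simpl; lra|].
  change (Rbar_prod (?x :: ?l)) with (Rbar_mult x (Rbar_prod l)).
  apply Rbar_mult_nonneg; [now apply Lub_Rbar_ub | exact IH].
Qed.

Lemma Rbar_prod_Lub_le (S : R -> R -> Prop) (ts : list R) (b : R) :
  (forall t, S t 0) -> (forall t v, S t v -> 0 <= v) ->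
  (forall vs, Forall2 S ts vs -> prodR vs <= b) ->
  Rbar_le (Rbar_prod (map (fun t => Lub_Rbar (S t)) ts)) (Finite b).
Proof.
  intros S0 Spos; revert b; induction ts as [|t ts IH]; intros b Hb; cbn [map].
  - exact (Hb nil (Forall2_nil _)).
  - assert (Hzeros : Forall2 S ts (map (fun _ => 0) ts)).
    { clear IH Hb. induction ts; constructor; auto. }
    change (Rbar_prod (?x :: ?l)) with (Rbar_mult x (Rbar_prod l)).
    apply Rbar_mult_Lub_le; [exact (S0 t) | exact (Spos t) | now apply Rbar_prod_Lub_nonneg |].
    intros v Hv. destruct (Rle_lt_or_eq_dec _ _ (Spos t v Hv)) as [Hv0|<-].
    + assert (HP : Rbar_le (Rbar_prod (map (fun t => Lub_Rbar (S t)) ts)) (Finite (b / v))).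
      { apply IH. intros vs Hvs. specialize (Hb (v :: vs) (Forall2_cons _ _ Hv Hvs)).
        simpl in Hb. apply Rmult_le_reg_l with v; [exact Hv0|]. field_simplify; lra. }
      pose proof (Rbar_prod_Lub_nonneg S ts S0) as HP0.
      clear IH. destruct (Rbar_prod _) as [p| |]; simpl in HP, HP0 |- *; try contradiction.
      apply Rmult_le_reg_l with (/ v); [now apply Rinv_0_lt_compat|].
      replace (/ v * (v * p)) with p by (field; lra). rewrite Rmult_comm. exact HP.
    + rewrite Rbar_mult_0_l. specialize (Hb _ (Forall2_cons _ _ Hv Hzeros)).
      simpl in Hb. simpl; lra.
Qed.

Fixpoint tuples {A} (Es : list (list A)) : list (list A) :=
  match Es with
  | nil => nil :: nil
  | E :: Es' => flat_map (fun x => map (cons x) (tuples Es')) E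
  end.

Lemma in_tuples {A} (Es : list (list A)) (L : list A) :
  In L (tuples Es) <-> Forall2 (@In A) L Es.
Proof.
  revert L; induction Es as [|E Es IH]; intros L; simpl.
  - split; [intros [<-|[]]; constructor | intros H; inversion H; auto].
  - rewrite in_flat_map. split.
    + intros [x [Hx HL]]. apply in_map_iff in HL as [L' [<- HL']].
      constructor; [exact Hx | now apply IH].
    + intros H; inversion H as [|x ? L' ? Hx HL']; subst.
      exists x; split; [exact Hx|]. apply in_map, IH, HL'.
Qed.

Lemma NoDup_tuples {A} (Es : list (list A)) : List.Forall (@NoDup A) Es -> NoDup (tuples Es).
Proof.
  induction 1 as [|E Es HE _ IH]; simpl; [repeat constructor; simpl; tauto|].
  induction HE as [|x E Hx _ IHE]; simpl; [constructor|].
  apply NoDup_app; [| exact IHE |].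
  - apply NoDup_map_NoDup_ForallPairs; [|exact IH].
    intros a b _ _ Hab; now injection Hab.
  - intros L HL HL'. apply in_map_iff in HL as [? [<- _]].
    apply in_flat_map in HL' as [x' [Hx' HL']]. apply in_map_iff in HL' as [? [Heq _]].
    injection Heq as ->. contradiction.
Qed.

Lemma length_tuples_repeat {A} (E : list A) (n : nat) :
  length (tuples (repeat E n)) = (length E ^ n)%nat.
Proof.
  induction n as [|n IH]; simpl; [reflexivity|]. rewrite <- IH.
  generalize (tuples (repeat E n)); intros Ls; clear IH.
  induction E as [|x E IHE]; simpl; [reflexivity|].
  now rewrite length_app, length_map, IHE.
Qed.

Lemma sumR_prodR_tuples {A} (w : A -> R) (Es : list (list A)) :
  sumR (map (fun L => prodR (map w L)) (tuples Es)) = prodR (map (fun E => sumR (map w E)) Es).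
Proof.
  induction Es as [|E Es IH]; [unfold sumR, prodR; simpl; ring|].
  simpl tuples. rewrite sumR_flat_map.
  change (prodR (map (fun E => sumR (map w E)) (E :: Es)))
    with (sumR (map w E) * prodR (map (fun E => sumR (map w E)) Es)).
  rewrite <- IH, <- sumR_map_mult_r. f_equal. apply map_ext; intros x.
  rewrite map_map, Rmult_comm, <- sumR_map_mult_r. f_equal.
  apply map_ext; intros L. unfold prodR; simpl. ring.
Qed.

Lemma Forall2_nth {A B} (Rel : A -> B -> Prop) (l1 : list A) (l2 : list B) (j : nat)
  (a0 : A) (b0 : B) :
  Forall2 Rel l1 l2 -> (j < length l1)%nat -> Rel (nth j l1 a0) (nth j l2 b0).
Proof.
  intros H; revert j; induction H as [|a b l1 l2 Hab _ IH]; intros j Hj; simpl in *; [lia|].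
  destruct j; [exact Hab | apply IH; lia].
Qed.

Lemma first_difference {A} (a b : list A) (x0 : A) : length a = length b -> a <> b ->
  exists j, (j < length a)%nat /\ firstn j a = firstn j b /\ nth j a x0 <> nth j b x0.
Proof.
  revert b; induction a as [|u a IH]; intros [|v b] Hl Hne; simpl in *; try discriminate.
  - congruence.
  - injection Hl as Hl. destruct (classic (u = v)) as [<-|Huv].
    + destruct (IH b Hl) as [j [Hj [H1 H2]]]; [congruence|].
      exists (S j); simpl; repeat split; [lia | now f_equal | exact H2].
    + exists O; simpl; repeat split; [lia | exact Huv].
Qed.

Lemma tuples_Forall2 {A B} (Q : A -> B -> Prop) (ts : list A) (Ps : list (list B)) (L : list B) :
  Forall2 (fun t P => forall p, In p P -> Q t p) ts Ps -> In L (tuples Ps) -> Forall2 Q ts L.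
Proof.
  intros H HL; apply in_tuples in HL; revert L HL.
  induction H as [|t P ts Ps HP _ IH]; intros L HL; inversion HL; subst; constructor; auto.
Qed.

Lemma Forall2_In_r {A B} (Q : A -> B -> Prop) (l1 : list A) (l2 : list B) (y : B) :
  Forall2 Q l1 l2 -> In y l2 -> exists x, In x l1 /\ Q x y.
Proof.
  induction 1 as [|x y' l1 l2 Hxy _ IH]; simpl; [tauto|].
  intros [<-|Hy]; [now exists x; split; [left|] |].
  destruct (IH Hy) as [x' [Hx' Q']]. exists x'; split; [now right | exact Q'].
Qed.

Lemma Forall2_map_eq {A B} (g : B -> A) (l1 : list A) (l2 : list B) :
  Forall2 (fun x y => g y = x) l1 l2 -> map g l2 = l1.
Proof. induction 1; simpl; congruence. Qed.

Lemma Forall2_In_repeat {A} (E l : list A) :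
  (forall x, In x l -> In x E) -> Forall2 (@In A) l (repeat E (length l)).
Proof.
  induction l as [|x l IH]; intros H; constructor; [apply H; now left|].
  apply IH; intros; apply H; now right.
Qed.

Section Classes.
Context {A C : Type} (C_eq_dec : forall a b : C, {a = b} + {a <> b}).
Variables (cls : A -> C) (w : A -> R).
Hypothesis w_nonneg : forall x, 0 <= w x.

Definition in_class (c : C) (x : A) : bool := if C_eq_dec (cls x) c then true else false.

Lemma sumR_indicator_ge (a : R) (c0 : C) (cs : list C) : 0 <= a -> In c0 cs ->
  a <= sumR (map (fun c => if C_eq_dec c0 c then a else 0) cs).
Proof.
  intros Ha; induction cs as [|c cs IH]; simpl; [tauto|].
  assert (Hrest : 0 <= sumR (map (fun c => if C_eq_dec c0 c then a else 0) cs)).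
  { apply sumR_nonneg. intros z Hz. apply in_map_iff in Hz as [c' [<- _]].
    destruct C_eq_dec; lra. }
  change (sumR (?x :: ?l)) with (x + sumR l).
  intros [->|Hin].
  - destruct C_eq_dec; [lra | congruence].
  - specialize (IH Hin). destruct C_eq_dec; lra.
Qed.

Lemma sumR_le_class_sums (cs : list C) (l : list A) : (forall x, In x l -> In (cls x) cs) ->
  sumR (map w l) <= sumR (map (fun c => sumR (map w (filter (in_class c) l))) cs).
Proof.
  induction l as [|x l IH]; intros Hcs.
  - change (sumR (map w nil)) with 0. apply sumR_nonneg.
    intros z Hz. apply in_map_iff in Hz as [c [<- _]]. simpl; lra.
  - rewrite (map_ext _ (fun c => (if C_eq_dec (cls x) c then w x else 0)
        + sumR (map w (filter (in_class c) l)))).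
    + rewrite sumR_map_plus. unfold sumR at 1; simpl; fold (sumR (map w l)).
      pose proof (sumR_indicator_ge (w x) (cls x) cs (w_nonneg x) (Hcs x (or_introl eq_refl))).
      specialize (IH (fun y Hy => Hcs y (or_intror Hy))). lra.
    + intros c. simpl filter. unfold in_class at 1. destruct C_eq_dec; simpl; ring.
Qed.

Lemma sumR_le_classes (cs : list C) (l : list A) (B : R) :
  (forall x, In x l -> In (cls x) cs) ->
  (forall c, sumR (map w (filter (in_class c) l)) <= B) ->
  sumR (map w l) <= INR (length cs) * B.
Proof.
  intros Hcs HB. eapply Rle_trans; [exact (sumR_le_class_sums cs l Hcs)|].
  apply sumR_le_const. intros c _. apply HB.
Qed.

End Classes.

(** * Bowen distance *)

Section Bowen_distance.
Context {X : Type} (d : X -> X -> R) (f : R -> X -> X).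

Lemma dt_ge (t : R) (x y : X) (s : R) : 0 <= s <= t ->
  Rbar_le (Finite (d (f s x) (f s y))) (dt d f t x y).
Proof. intros Hs. apply Lub_Rbar_ub. now exists s. Qed.

Lemma dt_lt_at (t : R) (x y : X) (s e : R) :
  Rbar_lt (dt d f t x y) (Finite e) -> 0 <= s <= t -> d (f s x) (f s y) < e.
Proof. intros H Hs. exact (Rbar_le_lt_trans _ _ _ (dt_ge t x y s Hs) H). Qed.

Lemma dt_gt_ex (t : R) (x y : X) (e : R) :
  Rbar_lt (Finite e) (dt d f t x y) -> exists s, 0 <= s <= t /\ e < d (f s x) (f s y).
Proof.
  intros H. apply NNPP; intros Hn. apply (Rbar_lt_not_le _ _ H).
  apply Lub_Rbar_le. intros v [s [Hs ->]].
  apply Rnot_lt_le; intros Hl; apply Hn; now exists s.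
Qed.

Lemma dt_sym (t : R) (x y : X) : (forall a b, d a b = d b a) -> dt d f t x y = dt d f t y x.
Proof.
  intros Hd; unfold dt; apply Lub_Rbar_eqset; intros v; split;
  intros [s [Hs ->]]; exists s; split; auto.
Qed.

Lemma shadows_separated (t s1 s2 gamma delta eps : R) (x1 x2 y1 y2 : X) :
  is_metric d -> (forall a b x, f (a + b) x = f a (f b x)) ->
  Rbar_lt (Finite gamma) (dt d f t x1 x2) ->
  Rbar_lt (dt d f t (f s1 y1) x1) (Finite delta) ->
  Rbar_lt (dt d f t (f s2 y2) x2) (Finite delta) ->
  (forall w, d (f (s1 - s2) w) w < eps) ->
  exists u, 0 <= u <= t /\ gamma - 2 * delta - eps < d (f (u + s1) y1) (f (u + s1) y2).
Proof.
  intros [_ [_ [Hsym Htri]]] Hflow Hx H1 H2 Hshift.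
  destruct (dt_gt_ex t x1 x2 gamma Hx) as [u [Hu Hgap]].
  pose proof (dt_lt_at _ _ _ u _ H1 Hu) as D1.
  pose proof (dt_lt_at _ _ _ u _ H2 Hu) as D2.
  pose proof (Hshift (f (u + s2) y2)) as D3.
  rewrite <- !Hflow in D1, D2, D3.
  replace (s1 - s2 + (u + s2)) with (u + s1) in D3 by ring.
  exists u; split; [exact Hu|].
  pose proof (Htri (f u x1) (f (u + s1) y1) (f u x2)).
  pose proof (Htri (f (u + s1) y1) (f (u + s1) y2) (f u x2)).
  pose proof (Htri (f (u + s1) y2) (f (u + s2) y2) (f u x2)).
  pose proof (Hsym (f u x1) (f (u + s1) y1)). lra.
Qed.

End Bowen_distance.

Section Compactness.
Context {X : Type} (d : X -> X -> R).
Hypothesis Hm : is_metric d.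
Hypothesis Hc : is_compact d.

Lemma continuous_fun_bounded (phi : X -> R) : is_continuous_fun d phi ->
  exists M, 0 <= M /\ forall x, Rabs (phi x) <= M.
Proof.
  intros Hp.
  destruct (Hc nat (fun n x => Rabs (phi x) < INR n)) as [l Hl].
  - intros n x Hx. destruct (Hp x (INR n - Rabs (phi x))) as [e [He H]]; [lra|].
    exists e; split; [exact He|]. intros y Hy. specialize (H y Hy).
    pose proof (Rabs_triang_inv (phi y) (phi x)). lra.
  - intros x. destruct (archimed (Rabs (phi x))) as [H1 _].
    assert (Hz : (0 <= up (Rabs (phi x)))%Z).
    { apply le_IZR. pose proof (Rabs_pos (phi x)). simpl. lra. }
    exists (Z.to_nat (up (Rabs (phi x)))). rewrite INR_IZR_INZ, Z2Nat.id by exact Hz. exact H1.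
  - exists (INR (list_max l)). split; [apply pos_INR|].
    intros x. destruct (Hl x) as [n [Hn Hx]].
    apply Rlt_le, Rlt_le_trans with (1 := Hx), le_INR.
    exact (proj1 (Forall_forall _ l) (proj1 (list_max_le l _) (Nat.le_refl _)) n Hn).
Qed.

Lemma list_min_pos {A} (r : A -> R) (l : list A) :
  exists eta, 0 < eta /\ forall a, In a l -> 0 < r a -> eta <= r a.
Proof.
  induction l as [|a l [e [He H]]]; [exists 1; split; [lra | simpl; tauto]|].
  destruct (Rlt_dec 0 (r a)) as [Ha|Ha].
  - exists (Rmin e (r a)); split; [now apply Rmin_pos|].
    intros b [<-|Hb] Hb0; [apply Rmin_r | eapply Rle_trans; [apply Rmin_l | auto]].
  - exists e; split; [exact He|]. intros b [<-|Hb] Hb0; [contradiction | auto].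
Qed.

Lemma flow_uniformly_close_to_identity (f : R -> X -> X) : is_continuous_flow d f ->
  forall eps, 0 < eps -> exists eta, 0 < eta /\ forall w h, Rabs h < eta -> d (f h w) w < eps.
Proof.
  intros [Hf0 [_ Hfc]] eps Heps. destruct Hm as [_ [Hdeq [Hsym Htri]]].
  set (good := fun (p : X * R) => 0 < snd p /\ snd p <= eps / 2 /\
    forall h x', Rabs h < snd p -> d (fst p) x' < snd p -> d (fst p) (f h x') < eps / 2).
  destruct (Hc {p | good p} (fun p w => d (fst (proj1_sig p)) w < snd (proj1_sig p))) as [l Hl].
  - intros [[z r] Hp] w Hw; simpl in *. exists (r - d z w). split; [lra|].
    intros v Hv. specialize (Htri z w v). lra.
  - intros w. destruct (Hfc 0 w (eps / 2)) as [e [He H]]; [lra|].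
    assert (Hg : good (w, Rmin e (eps / 2))).
    { split; [apply Rmin_pos; lra|]. split; [apply Rmin_r|].
      intros h x' Hh Hx'. simpl in *. rewrite <- (Hf0 w) at 1.
      pose proof (Rmin_l e (eps / 2)). apply H; [rewrite Rminus_0_r|]; lra. }
    exists (exist _ _ Hg). simpl. rewrite (proj2 (Hdeq w w) eq_refl). apply Rmin_pos; lra.
  - destruct (list_min_pos (fun p : {p | good p} => snd (proj1_sig p)) l) as [eta [Heta Hmin]].
    exists eta; split; [exact Heta|]. intros w h Hh.
    destruct (Hl w) as [[[z r] [Hr [Hre Hp]]] [Hin Hw]]; simpl in *.
    specialize (Hmin _ Hin Hr). simpl in Hmin.
    assert (Hzh : d z (f h w) < eps / 2) by (apply Hp; lra).
    pose proof (Htri (f h w) z w). pose proof (Hsym (f h w) z). lra.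
Qed.

End Compactness.

Section Orbit_integrals.
Context {X : Type} (d : X -> X -> R) (f : R -> X -> X) (phi : X -> R).
Hypotheses (Hm : is_metric d) (Hf : is_continuous_flow d f) (Hp : is_continuous_fun d phi).

Lemma continuous_along_orbit (y : X) (s : R) : continuous (fun u => phi (f u y)) s.
Proof.
  apply continuity_pt_filterlim. intros eps Heps.
  destruct (Hp (f s y) eps Heps) as [e1 [He1 H1]].
  destruct Hf as [_ [_ Hc]]. destruct (Hc s y e1 He1) as [e2 [He2 H2]].
  exists e2; split; [exact He2|]. intros s' [_ Hs']. apply H1, H2; [exact Hs'|].
  destruct Hm as [_ [Hd0 _]]. now rewrite (proj2 (Hd0 y y) eq_refl).
Qed.

Lemma ex_RInt_along_orbit (y : X) (a b : R) : ex_RInt (fun u => phi (f u y)) a b.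
Proof.
  apply (ex_RInt_continuous (V := R_CompleteNormedModule)).
  intros; apply continuous_along_orbit.
Qed.

Lemma RInt_along_orbit_shift (y : X) (a t : R) :
  RInt (fun u => phi (f u y)) a (a + t) = Phi0 f phi (f a y) t.
Proof.
  unfold Phi0. destruct Hf as [_ [Hflow _]].
  rewrite <- (Rplus_0_l a) at 1. rewrite (Rplus_comm a t).
  rewrite <- (Rmult_1_l 0), <- (Rmult_1_l t) at 1.
  rewrite <- (RInt_comp_lin (V := R_CompleteNormedModule)) by apply ex_RInt_along_orbit.
  apply RInt_ext. intros u _. rewrite Hflow. cbn. now rewrite Rmult_1_l, Rmult_1_l.
Qed.

End Orbit_integrals.

Lemma RInt_plus_const (h : R -> R) (M a b : R) : ex_RInt h a b ->
  RInt (fun u => h u + M) a b = RInt h a b + (b - a) * M.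
Proof.
  intros Hh.
  etransitivity.
  { exact (RInt_plus (V := R_CompleteNormedModule) h (fun _ => M) a b Hh (ex_RInt_const _ _ _)). }
  now rewrite (RInt_const (V := R_CompleteNormedModule)).
Qed.

(** * Orbit segments glued with gaps *)

Lemma seg_start_cons (t : R) (ts : list R) (g : nat -> R) (j : nat) :
  seg_start (t :: ts) g (S j) = t + g O + seg_start ts (fun i => g (S i)) j.
Proof. reflexivity. Qed.

Lemma seg_start_nonneg (ts : list R) (g : nat -> R) (j : nat) :
  (forall t, In t ts -> 0 <= t) -> (forall i, (S i < length ts)%nat -> 0 <= g i) ->
  (j < length ts)%nat -> 0 <= seg_start ts g j.
Proof.
  revert g j; induction ts as [|t ts IH]; intros g [|j] Ht Hg Hj; simpl in Hj; try lia;
    [destruct ts; simpl; lra|].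
  rewrite seg_start_cons.
  assert (0 <= t) by (apply Ht; now left). assert (0 <= g O) by (apply Hg; simpl; lia).
  assert (0 <= seg_start ts (fun i => g (S i)) j).
  { apply IH; [intros; apply Ht; now right | intros i Hi; apply Hg; simpl; lia | lia]. }
  lra.
Qed.

Lemma seg_start_add_le (ts : list R) (g : nat -> R) (tau : R) (j : nat) :
  (forall t, In t ts -> 0 <= t) -> (forall i, (S i < length ts)%nat -> 0 <= g i <= tau) ->
  (j < length ts)%nat ->
  seg_start ts g j + nth j ts 0 <= sumR ts + INR (length ts - 1) * tau.
Proof.
  revert g j; induction ts as [|t ts IH]; intros g j Ht Hg Hj; simpl in Hj; [lia|].
  change (sumR (t :: ts)) with (t + sumR ts).
  assert (Hs : 0 <= sumR ts) by (apply sumR_nonneg; intros; apply Ht; now right).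
  destruct ts as [|t' ts'].
  - destruct j as [|j]; [simpl; lra | simpl in Hj; lia].
  - assert (Hg0 : 0 <= g O <= tau) by (apply Hg; simpl; lia).
    replace (length (t :: t' :: ts') - 1)%nat with (S (length (t' :: ts') - 1)) by (simpl; lia).
    rewrite S_INR.
    assert (0 <= INR (length (t' :: ts') - 1) * tau)
      by (apply Rmult_le_pos; [apply pos_INR | lra]).
    destruct j as [|j]; [cbn [seg_start nth]; lra|].
    rewrite seg_start_cons. change (nth (S j) (t :: t' :: ts') 0) with (nth j (t' :: ts') 0).
    assert (HI := IH (fun i => g (S i)) j (fun u Hu => Ht u (or_intror Hu))
      (fun i Hi => Hg (S i) ltac:(simpl in *; lia)) ltac:(lia)).
    lra.
Qed.

Lemma seg_start_close (ts : list R) (g g' : nat -> R) (j : nat) (eta : R) : 0 < eta ->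
  (forall i, (S i < j)%nat -> g i = g' i) ->
  ((1 <= j)%nat -> Rabs (g (j - 1)%nat - g' (j - 1)%nat) < eta) ->
  Rabs (seg_start ts g j - seg_start ts g' j) < eta.
Proof.
  revert g g' j; induction ts as [|t ts IH]; intros g g' j He Hg Hj.
  - destruct j; simpl; rewrite Rminus_0_r, Rabs_R0; exact He.
  - destruct j as [|j]; [simpl; rewrite Rminus_0_r, Rabs_R0; exact He|].
    rewrite !seg_start_cons.
    destruct j as [|j].
    + specialize (Hj ltac:(lia)). simpl in Hj. destruct ts; simpl;
      replace (t + g O + 0 - (t + g' O + 0)) with (g O - g' O) by ring; exact Hj.
    + rewrite (Hg O) by lia.
      replace (t + g' O + seg_start ts (fun i => g (S i)) (S j)
               - (t + g' O + seg_start ts (fun i => g' (S i)) (S j)))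
        with (seg_start ts (fun i => g (S i)) (S j) - seg_start ts (fun i => g' (S i)) (S j))
        by ring.
      apply IH; [exact He | intros i Hi; apply Hg; lia |].
      intros _. specialize (Hj ltac:(lia)).
      now replace (S (S j) - 1)%nat with (S (S j - 1)) in Hj by lia.
Qed.

Lemma sum_RInt_segments_le (h : R -> R) (tau : R) :
  (forall u v, ex_RInt h u v) -> (forall u, 0 <= h u) ->
  forall (ts : list R) (g : nat -> R) (a c e : R), c <= a ->
  (forall i, (S i < length ts)%nat -> 0 <= g i <= tau) ->
  a + sumR ts + INR (length ts - 1) * tau <= e ->
  sumR (map (fun j => RInt h (a + seg_start ts g j) (a + seg_start ts g j + nth j ts 0))
            (seq 0 (length ts))) <= RInt h c e.
Proof.
  intros Hex Hpos.
  assert (Hnonneg : forall u v, u <= v -> 0 <= RInt h u v)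
    by (intros u v Huv; apply RInt_ge_0; auto).
  assert (Hsplit : forall u v w, RInt h u w = RInt h u v + RInt h v w)
    by (intros u v w; symmetry; apply (RInt_Chasles (V := R_CompleteNormedModule)); auto).
  induction ts as [|t ts IH]; intros g a c e Hca Hg Hae.
  - apply Hnonneg. simpl in Hae. lra.
  - change (sumR (t :: ts)) with (t + sumR ts) in Hae.
    rewrite (Hsplit c a e), (Hsplit a (a + t) e).
    cbn [length seq map]. change (sumR (?x :: ?l)) with (x + sumR l).
    replace (a + seg_start (t :: ts) g 0) with a by (simpl; ring).
    rewrite <- seq_shift, map_map.
    pose proof (Hnonneg c a Hca) as Hca_nonneg.
    destruct ts as [|t' ts'].
    + simpl in Hae |- *. pose proof (Hnonneg (a + t) e ltac:(lra)). lra.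
    + assert (Hg0 : 0 <= g O <= tau) by (apply Hg; simpl; lia).
      set (g' := fun i => g (S i)).
      rewrite (map_ext _ (fun j => RInt h (a + t + g O + seg_start (t' :: ts') g' j)
          (a + t + g O + seg_start (t' :: ts') g' j + nth j (t' :: ts') 0))).
      2: { intros j. rewrite seg_start_cons. cbn [nth]. f_equal; unfold g'; ring. }
      replace (length (t :: t' :: ts') - 1)%nat with (S (length (t' :: ts') - 1)) in Hae
        by (simpl; lia).
      rewrite S_INR in Hae.
      assert (HI := IH g' (a + t + g O) (a + t) e ltac:(lra)
        (fun i Hi => Hg (S i) ltac:(simpl in *; lia)) ltac:(lra)).
      change (nth 0 (t :: t' :: ts') 0) with t. lra.
Qed.

(** * Discretising the gaps *)

Definition gap_index (eta a : R) : nat := Z.to_nat (Int_part (a / eta)).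

Lemma Int_part_nonneg (r : R) : 0 <= r -> (0 <= Int_part r)%Z.
Proof.
  intros H. destruct (base_Int_part r) as [_ H2].
  assert (H3 : (-1 < Int_part r)%Z) by (apply lt_IZR; simpl; lra). lia.
Qed.

Lemma Int_part_le (x y : R) : x <= y -> (Int_part x <= Int_part y)%Z.
Proof.
  intros H. destruct (base_Int_part x) as [H1 _]. destruct (base_Int_part y) as [_ H2].
  assert (H3 : (Int_part x < Int_part y + 1)%Z) by (apply lt_IZR; rewrite plus_IZR; simpl; lra).
  lia.
Qed.

Lemma gap_index_eq_close (eta a b : R) : 0 < eta -> 0 <= a -> 0 <= b ->
  gap_index eta a = gap_index eta b -> Rabs (a - b) < eta.
Proof.
  unfold gap_index; intros He Ha Hb H.
  assert (Ha' : 0 <= a / eta) by (apply Rdiv_le_0_compat; lra).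
  assert (Hb' : 0 <= b / eta) by (apply Rdiv_le_0_compat; lra).
  pose proof (Int_part_nonneg _ Ha'); pose proof (Int_part_nonneg _ Hb').
  assert (Heq : Int_part (a / eta) = Int_part (b / eta)) by lia.
  destruct (base_Int_part (a / eta)) as [A1 A2]. destruct (base_Int_part (b / eta)) as [B1 B2].
  rewrite Heq in A1, A2.
  assert (Hd : Rabs (a / eta - b / eta) < 1) by (apply Rabs_def1; lra).
  replace (a - b) with (eta * (a / eta - b / eta)) by (field; lra).
  rewrite Rabs_mult, Rabs_pos_eq by lra.
  pose proof (Rmult_lt_compat_l eta _ _ He Hd). lra.
Qed.

Lemma gap_index_lt (eta a b : R) : 0 < eta -> 0 <= a <= b ->
  (gap_index eta a < S (gap_index eta b))%nat.
Proof.
  unfold gap_index; intros He Ha.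
  assert (Ha' : 0 <= a / eta) by (apply Rdiv_le_0_compat; lra).
  assert (Hat : a / eta <= b / eta)
    by (apply Rmult_le_compat_r; [apply Rlt_le, Rinv_0_lt_compat|]; lra).
  pose proof (Int_part_nonneg _ Ha'). pose proof (Int_part_le _ _ Hat). lia.
Qed.

Section Specification.
Context {X : Type} (d : X -> X -> R) (f : R -> X -> X).

Definition shadows (delta : R) (s : nat -> R) (L : list (X * R)) (y : X) : Prop :=
  forall j p0, (j < length L)%nat ->
    Rbar_lt (dt d f (snd (nth j L p0)) (f (s j) y) (fst (nth j L p0))) (Finite delta).

Lemma W_specification_shadows (G' : X -> R -> Prop) (delta tau : R) :
  W_specification d f G' delta tau ->
  exists (gaps : list (X * R) -> nat -> R) (shadow : list (X * R) -> X),
    (forall L, (forall p, In p L -> G' (fst p) (snd p)) ->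
       (forall i, (S i < length L)%nat -> 0 <= gaps L i <= tau) /\
       shadows delta (seg_start (map snd L) (gaps L)) L (shadow L)) /\
    (forall L1 L2 j,
       (forall p, In p L1 -> G' (fst p) (snd p)) ->
       (forall p, In p L2 -> G' (fst p) (snd p)) ->
       firstn j L1 = firstn j L2 ->
       forall i, (S i < j)%nat -> gaps L1 i = gaps L2 i).
Proof.
  intros [gaps [Hspec Hcons]].
  destruct (Hspec nil (fun p H => match H with end)) as [_ [x0 _]].
  exists gaps, (fun L => epsilon (inhabits x0) (shadows delta (seg_start (map snd L) (gaps L)) L)).
  split; [|exact Hcons].
  intros L HL. destruct (Hspec L HL) as [Hgaps [y Hy]]. split; [exact Hgaps|].
  apply epsilon_spec. exists y. intros j p0 Hj.
  specialize (Hy j Hj). cbv zeta in Hy. now rewrite (nth_indep L _ p0) in Hy by exact Hj.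
Qed.

End Specification.

Section Partition_sums.
Context {X : Type} (d : X -> X -> R) (f : R -> X -> X) (phi : X -> R).

Definition seg_weight (p : X * R) : R := exp (Phi0 f phi (fst p) (snd p)).

Definition tuple_weight (L : list (X * R)) : R := prodR (map seg_weight L).

Lemma Lambda0_nonneg (C : X -> R -> Prop) (delta t : R) :
  Rbar_le 0 (Lambda0 d f phi C delta t).
Proof.
  apply Lub_Rbar_ub. exists nil. repeat split; [constructor | intros x [] | intros x y []].
Qed.

(* A separated set [E] at time [t] is encoded as the list of segments [(x, t)], x in E. *)
Lemma Rbar_prod_Lambda0_le (C : X -> R -> Prop) (gamma : R) (ts : list R) (b : R) :
  (forall Ps, Forall2 (fun t P => NoDup P /\ (forall p, In p P -> snd p = t /\ C (fst p) t) /\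
                                  separated d f t gamma (map fst P)) ts Ps ->
     sumR (map tuple_weight (tuples Ps)) <= b) ->
  Rbar_le (Rbar_prod (map (fun t => Lambda0 d f phi C gamma t) ts)) (Finite b).
Proof.
  intros Hb. apply Rbar_prod_Lub_le.
  - intros t. exists nil. repeat split; [constructor | intros x [] | intros x y []].
  - intros t v [E [_ [_ [_ ->]]]]. rewrite sumR_fold. apply sumR_nonneg.
    intros z Hz. apply in_map_iff in Hz as [x [<- _]]. apply Rlt_le, exp_pos.
  - intros vs Hvs.
    assert (HPs : exists Ps, Forall2 (fun t P => NoDup P /\
        (forall p, In p P -> snd p = t /\ C (fst p) t) /\ separated d f t gamma (map fst P)) ts Ps
        /\ prodR vs = prodR (map (fun P => sumR (map seg_weight P)) Ps)).
    { clear Hb. induction Hvs as [|t v ts vs [E [HE [HC [Hsep ->]]]] _ [Ps [HPs Hprod]]].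
      - exists nil. split; [constructor | reflexivity].
      - exists (map (fun x => (x, t)) E :: Ps). split; [constructor; [|exact HPs]|].
        + split; [|split].
          * apply NoDup_map_NoDup_ForallPairs; [|exact HE].
            intros x1 x2 _ _ Heq; now injection Heq.
          * intros p Hp. apply in_map_iff in Hp as [x [<- Hx]]. split; [reflexivity | now apply HC].
          * now rewrite map_map, map_id.
        + cbn [map]. change (prodR (?a :: ?l)) with (a * prodR l).
          rewrite Hprod, sumR_fold, map_map. reflexivity. }
    destruct HPs as [Ps [HPs ->]]. rewrite <- sumR_prodR_tuples. exact (Hb Ps HPs).
Qed.

End Partition_sums.

(** * Counting orbits glued by specification *)

Section Counting.
Context {X : Type} (d : X -> X -> R) (f : R -> X -> X) (phi : X -> R) (G : X -> R -> Prop).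
Variables (T0 delta tau gamma theta eta K M : R).
Hypotheses (Hm : is_metric d) (Hf : is_continuous_flow d f) (Hp : is_continuous_fun d phi).
Hypothesis HG0 : forall x t, G x t -> 0 <= t.
Hypotheses (HM0 : 0 <= M) (HM : forall x, Rabs (phi x) <= M).
Hypothesis Hbowen : forall x t, G x t -> forall y, Rbar_lt (dt d f t x y) (Finite delta) ->
  Rabs (Phi0 f phi x t - Phi0 f phi y t) <= K.
Hypotheses (Htheta : 0 <= theta) (Heta : 0 < eta).
Hypothesis Hflow_eta : forall w h, Rabs h < eta -> d (f h w) w < gamma - 2 * delta - theta.

Let admissible (L : list (X * R)) := forall p, In p L -> G (fst p) (snd p) /\ T0 <= snd p.

Variables (gaps : list (X * R) -> nat -> R) (shadow : list (X * R) -> X).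
Hypothesis Hshadow : forall L, admissible L ->
  (forall i, (S i < length L)%nat -> 0 <= gaps L i <= tau) /\
  shadows d f delta (seg_start (map snd L) (gaps L)) L (shadow L).
Hypothesis Hcons : forall L1 L2 j, admissible L1 -> admissible L2 ->
  firstn j L1 = firstn j L2 -> forall i, (S i < j)%nat -> gaps L1 i = gaps L2 i.

Lemma Phi0_le_RInt_shadow (x y : X) (t s : R) :
  G x t -> Rbar_lt (dt d f t (f s y) x) (Finite delta) ->
  Phi0 f phi x t + - K + M * t <= RInt (fun u => phi (f u y) + M) s (s + t).
Proof.
  intros HG Hd.
  rewrite RInt_plus_const by now apply (ex_RInt_along_orbit d).
  rewrite (RInt_along_orbit_shift d) by assumption.
  rewrite dt_sym in Hd by apply Hm.
  pose proof (Rle_trans _ _ _ (Rle_abs _) (Hbowen x t HG _ Hd)). lra.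
Qed.

Variables (ts : list R) (Ps : list (list (X * R))) (l : R).
Hypothesis Hts : forall t, In t ts -> T0 <= t.
Hypothesis HPs : Forall2 (fun t P => NoDup P /\ (forall p, In p P -> snd p = t /\ G (fst p) t) /\
                                     separated d f t gamma (map fst P)) ts Ps.

Let k := length ts.
Let T := sumR ts + INR (k - 1) * tau.
Hypothesis HL : Lambda0 d f phi (fun _ _ => True) theta T = Finite l.

Lemma tuple_admissible (L : list (X * R)) :
  In L (tuples Ps) -> admissible L /\ map snd L = ts /\ (forall t, In t ts -> 0 <= t).
Proof.
  intros HL'.
  assert (H2 : Forall2 (fun t p => snd p = t /\ G (fst p) t) ts L).
  { apply (tuples_Forall2 _ ts Ps); [|exact HL'].
    eapply Forall2_impl; [|exact HPs]. intros t P [_ [HP _]]; exact HP. }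
  assert (Hsnd : map snd L = ts)
    by (apply Forall2_map_eq; eapply Forall2_impl; [|exact H2]; now intros t p [Ht _]).
  split; [|split; [exact Hsnd|]].
  - intros p Hin. destruct (Forall2_In_r _ _ _ _ H2 Hin) as [t [Ht [<- HG]]].
    split; [exact HG | now apply Hts].
  - intros t Ht. rewrite <- Hsnd in Ht. apply in_map_iff in Ht as [p [<- Hin]].
    destruct (Forall2_In_r _ _ _ _ H2 Hin) as [t [_ [<- HG]]]. exact (HG0 _ _ HG).
Qed.

Lemma tuple_gaps_bounds (L : list (X * R)) (i : nat) :
  In L (tuples Ps) -> (S i < k)%nat -> 0 <= gaps L i <= tau.
Proof.
  intros HL' Hi. destruct (tuple_admissible L HL') as [Hadm [Hsnd _]].
  apply (Hshadow L Hadm). rewrite <- (length_map snd), Hsnd. exact Hi.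
Qed.

Lemma tuple_weight_le (L : list (X * R)) : In L (tuples Ps) ->
  tuple_weight f phi L <= exp (K + M * Rabs tau) ^ k * exp (Phi0 f phi (shadow L) T).
Proof.
  intros HL'. destruct (tuple_admissible L HL') as [Hadm [Hsnd Hts0]].
  destruct (Hshadow L Hadm) as [Hgaps Hsh]. rewrite Hsnd in Hsh.
  set (y := shadow L) in *. set (p0 := (y, 0)).
  assert (Hlen : length L = k) by (unfold k; now rewrite <- Hsnd, length_map).
  assert (Hsum : sumR (map (fun p => Phi0 f phi (fst p) (snd p) + - K + M * snd p) L)
                 <= RInt (fun u => phi (f u y) + M) 0 T).
  { rewrite (sumR_map_nth _ L p0), Hlen. eapply Rle_trans.
    2: { apply (sum_RInt_segments_le _ tau) with (ts := ts) (g := gaps L) (a := 0); try lra.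
         - intros u v. apply (ex_RInt_plus (V := R_CompleteNormedModule) _ (fun _ => M)).
           + now apply (ex_RInt_along_orbit d).
           + apply ex_RInt_const.
         - intros u. pose proof (HM (f u y)). pose proof (Rle_abs (- phi (f u y))).
           rewrite Rabs_Ropp in *. lra.
         - intros i Hi. apply Hgaps. now rewrite Hlen.
         - unfold T, k. lra. }
    apply sumR_le. intros j Hj. apply in_seq in Hj.
    assert (Hj' : (j < length L)%nat) by lia.
    assert (Hsj : snd (nth j L p0) = nth j ts 0).
    { rewrite <- Hsnd, (nth_indep _ 0 (snd p0)) by now rewrite length_map. now rewrite map_nth. }
    rewrite <- Hsj, !Rplus_0_l. apply Phi0_le_RInt_shadow.
    - apply (Hadm _ (nth_In _ _ Hj')).
    - exact (Hsh j p0 Hj'). }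
  rewrite sumR_map_affine, RInt_plus_const, Rminus_0_r, Hlen, Hsnd in Hsum
    by now apply (ex_RInt_along_orbit d).
  fold (Phi0 f phi y T) in Hsum.
  unfold tuple_weight, seg_weight. rewrite prodR_exp, exp_pow, <- exp_plus. apply exp_le.
  assert (Htau : INR (k - 1) * tau <= INR k * Rabs tau).
  { apply Rle_trans with (INR (k - 1) * Rabs tau).
    - apply Rmult_le_compat_l; [apply pos_INR | apply Rle_abs].
    - apply Rmult_le_compat_r; [apply Rabs_pos | apply le_INR; lia]. }
  pose proof (Rmult_le_compat_l M _ _ HM0 Htau). unfold T in *. lra.
Qed.

Let cell (L : list (X * R)) : list nat :=
  map (fun i => gap_index eta (gaps L i)) (seq 0 (k - 1)).

Lemma cell_start_close (La Lb : list (X * R)) (j : nat) :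
  In La (tuples Ps) -> In Lb (tuples Ps) -> cell La = cell Lb -> firstn j La = firstn j Lb ->
  (j < k)%nat -> Rabs (seg_start ts (gaps La) j - seg_start ts (gaps Lb) j) < eta.
Proof.
  intros Ha Hb Hcell Hfirst Hj.
  destruct (tuple_admissible La Ha) as [Hadma _]. destruct (tuple_admissible Lb Hb) as [Hadmb _].
  apply seg_start_close; [exact Heta | exact (Hcons La Lb j Hadma Hadmb Hfirst) |].
  intros Hj1.
  assert (Hidx : forall L, nth (j - 1) (cell L) O = gap_index eta (gaps L (j - 1)%nat)).
  { intros L. unfold cell.
    rewrite (nth_indep _ O ((fun i => gap_index eta (gaps L i)) O))
      by (rewrite length_map, length_seq; lia).
    rewrite (map_nth (fun i => gap_index eta (gaps L i)) (seq 0 (k - 1)) O (j - 1)).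
    now rewrite seq_nth by lia. }
  apply gap_index_eq_close; [exact Heta | apply tuple_gaps_bounds; auto; lia
    | apply tuple_gaps_bounds; auto; lia |].
  now rewrite <- !Hidx, Hcell.
Qed.

Lemma tuple_nth (L : list (X * R)) (j : nat) (p0 : X * R) : In L (tuples Ps) -> (j < k)%nat ->
  In (nth j L p0) (nth j Ps nil) /\ snd (nth j L p0) = nth j ts 0.
Proof.
  intros HL' Hj. apply in_tuples in HL'.
  assert (Hin : In (nth j L p0) (nth j Ps nil)).
  { apply Forall2_nth; [exact HL'|].
    rewrite (Forall2_length HL'), <- (Forall2_length HPs). exact Hj. }
  split; [exact Hin|].
  pose proof (Forall2_nth _ _ _ j 0 nil HPs Hj) as [_ [HP _]]. exact (proj1 (HP _ Hin)).
Qed.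

Lemma cell_shadows_separated (La Lb : list (X * R)) :
  In La (tuples Ps) -> In Lb (tuples Ps) -> cell La = cell Lb -> La <> Lb ->
  exists s, 0 <= s <= T /\ theta < d (f s (shadow La)) (f s (shadow Lb)).
Proof.
  intros Ha Hb Hcell Hne.
  destruct (tuple_admissible La Ha) as [Hadma [Hsnda Hts0]].
  destruct (tuple_admissible Lb Hb) as [Hadmb [Hsndb _]].
  assert (Hlena : length La = k) by (unfold k; now rewrite <- Hsnda, length_map).
  assert (Hlenb : length Lb = k) by (unfold k; now rewrite <- Hsndb, length_map).
  set (p0 := (shadow La, 0)).
  destruct (first_difference La Lb p0 ltac:(congruence) Hne) as [j [Hj [Hfirst Hdiff]]].
  rewrite Hlena in Hj.
  destruct (tuple_nth La j p0 Ha Hj) as [HpA HsA], (tuple_nth Lb j p0 Hb Hj) as [HpB HsB].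
  assert (Hfst : fst (nth j La p0) <> fst (nth j Lb p0)).
  { intros E. apply Hdiff. destruct (nth j La p0), (nth j Lb p0); simpl in *; congruence. }
  pose proof (Forall2_nth _ _ _ j 0 nil HPs Hj) as [_ [_ Hsep]].
  specialize (Hsep _ _ (in_map fst _ _ HpA) (in_map fst _ _ HpB) Hfst).
  destruct (Hshadow La Hadma) as [_ ShA], (Hshadow Lb Hadmb) as [_ ShB].
  rewrite Hsnda in ShA. rewrite Hsndb in ShB.
  specialize (ShA j p0 ltac:(lia)). specialize (ShB j p0 ltac:(lia)).
  rewrite HsA in ShA. rewrite HsB in ShB.
  assert (Hclose := cell_start_close La Lb j Ha Hb Hcell Hfirst Hj).
  set (sa := seg_start ts (gaps La) j) in *. set (sb := seg_start ts (gaps Lb) j) in *.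
  destruct (shadows_separated d f _ sa sb gamma delta (gamma - 2 * delta - theta) _ _ _ _
    Hm (proj1 (proj2 Hf)) Hsep ShA ShB (fun w => Hflow_eta w _ Hclose)) as [u [Hu Hsepu]].
  exists (u + sa). split; [|lra].
  assert (0 <= sa).
  { apply seg_start_nonneg; [exact Hts0 | intros i Hi; now apply tuple_gaps_bounds | exact Hj]. }
  assert (sa + nth j ts 0 <= T).
  { apply seg_start_add_le; [exact Hts0 | intros i Hi; now apply tuple_gaps_bounds | exact Hj]. }
  lra.
Qed.

Lemma cell_sum_le (c : list nat) :
  sumR (map (tuple_weight f phi) (filter (in_class (list_eq_dec Nat.eq_dec) cell c) (tuples Ps)))
  <= exp (K + M * Rabs tau) ^ k * l.
Proof.
  set (Lc := filter _ (tuples Ps)).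
  assert (HLc : forall L, In L Lc -> In L (tuples Ps) /\ cell L = c).
  { intros L HL'. apply filter_In in HL' as [H1 H2]. unfold in_class in H2.
    destruct list_eq_dec; [auto | discriminate]. }
  set (c0 := exp (K + M * Rabs tau) ^ k).
  eapply Rle_trans.
  { apply sumR_le with (F2 := fun L => exp (Phi0 f phi (shadow L) T) * c0).
    intros L HL'. rewrite Rmult_comm. apply tuple_weight_le, HLc, HL'. }
  rewrite sumR_map_mult_r, Rmult_comm. apply Rmult_le_compat_l; [apply pow_le, Rlt_le, exp_pos|].
  assert (Hsum : Rbar_le (Finite (sumR (map (fun y => exp (Phi0 f phi y T)) (map shadow Lc))))
                         (Finite l)).
  { rewrite <- HL. apply Lub_Rbar_ub. exists (map shadow Lc). split; [|split; [|split]].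
    - apply NoDup_map_NoDup_ForallPairs.
      + intros a b Ha Hb Hab. apply NNPP; intros Hne.
        destruct (HLc a Ha) as [Ha' Hca], (HLc b Hb) as [Hb' Hcb].
        destruct (cell_shadows_separated a b Ha' Hb' ltac:(congruence) Hne) as [s [_ Hs]].
        rewrite Hab, (proj2 (proj1 (proj2 Hm) _ _) eq_refl) in Hs. lra.
      + apply NoDup_filter, NoDup_tuples, Forall_forall. intros P HP.
        now destruct (Forall2_In_r _ _ _ _ HPs HP) as [t [_ [HN _]]].
    - intros; exact I.
    - intros y1 y2 H1 H2 Hne.
      apply in_map_iff in H1 as [a [<- Ha]]. apply in_map_iff in H2 as [b [<- Hb]].
      destruct (HLc a Ha) as [Ha' Hca], (HLc b Hb) as [Hb' Hcb].
      destruct (cell_shadows_separated a b Ha' Hb' ltac:(congruence)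
        (fun E => Hne (f_equal shadow E))) as [s [Hs Hsd]].
      exact (Rbar_lt_le_trans (Finite theta) (Finite (d (f s (shadow a)) (f s (shadow b)))) _
        Hsd (dt_ge d f _ _ _ _ Hs)).
    - symmetry. apply sumR_fold. }
  rewrite map_map in Hsum. exact Hsum.
Qed.

Lemma tuples_sum_le :
  sumR (map (tuple_weight f phi) (tuples Ps))
  <= (INR (S (gap_index eta (Rabs tau))) * exp (K + M * Rabs tau)) ^ k * l.
Proof.
  set (N := S (gap_index eta (Rabs tau))).
  assert (Hl0 : 0 <= l).
  { pose proof (Lambda0_nonneg d f phi (fun _ _ => True) theta T) as H. now rewrite HL in H. }
  eapply Rle_trans.
  - apply (sumR_le_classes (list_eq_dec Nat.eq_dec) cell (tuple_weight f phi))
      with (cs := tuples (repeat (seq 0 N) (k - 1))).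
    + intros L. unfold tuple_weight, seg_weight. rewrite prodR_exp. apply Rlt_le, exp_pos.
    + intros L HL'. apply in_tuples.
      replace (k - 1)%nat with (length (cell L))
        by (unfold cell; now rewrite length_map, length_seq).
      apply Forall2_In_repeat. intros n Hn. unfold cell in Hn.
      apply in_map_iff in Hn as [i [<- Hi]]. apply in_seq in Hi. apply in_seq. split; [lia|].
      apply gap_index_lt; [exact Heta|].
      pose proof (tuple_gaps_bounds L i HL' ltac:(lia)). pose proof (Rle_abs tau). lra.
    + intros c. apply cell_sum_le.
  - rewrite length_tuples_repeat, length_seq, pow_INR, Rpow_mult_distr, Rmult_assoc.
    apply Rmult_le_compat_r; [apply Rmult_le_pos; [apply pow_le, Rlt_le, exp_pos | exact Hl0]|].
    apply Rle_pow; [|lia]. unfold N. rewrite S_INR.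
    pose proof (pos_INR (gap_index eta (Rabs tau))). lra.
Qed.

End Counting.

Theorem proposition4p3 :
  forall (X : Type) (d : X -> X -> R) (f : R -> X -> X) (phi : X -> R)
         (G : X -> R -> Prop) (T0 delta tau zeta : R),
    is_metric d -> is_compact d -> is_continuous_flow d f ->
    is_continuous_fun d phi ->
    (forall x t, G x t -> 0 <= t) ->
    0 < delta ->
    W_specification d f (fun x t => G x t /\ T0 <= t) delta tau ->
    delta < zeta ->
    Bowen_property d f phi G zeta ->
    forall gamma, 2 * zeta < gamma ->
    exists C1, 0 < C1 /\
      forall ts : list R, ts <> nil -> (forall t, In t ts -> T0 <= t) ->
        let k := length ts in
        let T := fold_right Rplus 0 ts + INR (k - 1) * tau in
        let theta := zeta - delta in
        Rbar_le (Rbar_prod (map (fun t => Lambda0 d f phi G gamma t) ts))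
                (Rbar_mult (Finite (C1 ^ k))
                           (Lambda0 d f phi (fun _ _ => True) theta T)).
Proof.
  intros X d f phi G T0 delta tau zeta Hm Hc Hf Hp HG0 _ Hspec Hdz [K HK] gamma Hgamma.
  destruct (continuous_fun_bounded d Hc phi Hp) as [M [HM0 HM]].
  destruct (flow_uniformly_close_to_identity d Hm Hc f Hf (gamma - 2 * delta - (zeta - delta)))
    as [eta [Heta Hflow]]; [lra|].
  destruct (W_specification_shadows d f _ _ _ Hspec) as [gaps [shadow [Hshadow Hcons]]].
  exists (INR (S (gap_index eta (Rabs tau))) * exp (K + M * Rabs tau)).
  split; [apply Rmult_lt_0_compat; [apply lt_0_INR; lia | apply exp_pos]|].
  intros ts _ Hts; cbv zeta.
  pose proof (Lambda0_nonneg d f phi (fun _ _ => True) (zeta - delta)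
    (fold_right Rplus 0 ts + INR (length ts - 1) * tau)) as HL0.
  destruct (Lambda0 _ _ _ _ _ _) as [l| |] eqn:HL; [| |contradiction].
  - apply Rbar_prod_Lambda0_le. intros Ps HPs.
    apply (tuples_sum_le d f phi G T0 delta tau gamma (zeta - delta) eta K M
      Hm Hf Hp HG0 HM0 HM) with (gaps := gaps) (shadow := shadow); try assumption; try lra.
    intros x t Hx y Hy. apply (HK x t Hx y). eapply Rbar_lt_trans; [exact Hy | exact Hdz].
  - rewrite Rbar_mult_pos_p_infty; [now destruct Rbar_prod | apply pow_lt, Rmult_lt_0_compat].
    + apply lt_0_INR; lia.
    + apply exp_pos.
Qed.
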